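(* Let $E$ be an arbitrary directed graph and $U$ a compact open invariant subset of $G_E^{(0)}$. Let $\mathcal{M}$ be the set of all minimal nonempty compact open invariant subsets of $G_E^{(0)}$ contained in $U$. Then $\mathcal{M}$ is finite, its elements are pairwise disjoint, and $U=\bigsqcup_{V\in\mathcal{M}}V$.
   Context: For a directed graph $E$ (paths $\mu=\mu_1\cdots\mu_n$ with $r(\mu_i)=s(\mu_{i+1})$, $|\mu|=n$, $\mathrm{Path}(E)$ the finite paths including vertices, $E^\infty$ infinite paths, sinks = vertices emitting no edges, $\mathrm{Inf}(E)$ = vertices emitting infinitely many edges), let $X=E^\infty\cup\{\mu\in\mathrm{Path}(E): r(\mu)\text{ a sink}\}\cup\{\mu: r(\mu)\in\mathrm{Inf}(E)\}$ and $G_E=\{(\alpha x,|\alpha|-|\beta|,\beta x):\alpha,\beta\in\mathrm{Path}(E),x\in X,r(\alpha)=r(\beta)=s(x)\}$, with product $(x,k,y)(y,l,z)=(x,k+l,z)$, inverse $(y,-k,x)$, range $(x,0,x)$, source $(y,0,y)$; unit space $G_E^{(0)}=\{(x,0,x)\}\cong X$, topologized by the basis of compact open sets $Z(\mu)\setminus\bigcup_{e\in F}Z(\mu e)$ with $Z(\mu)=\{\mu x:x\in X,s(x)=r(\mu)\}$ and $F\subseteq s^{-1}(r(\mu))$ finite. $U\subseteq G_E^{(0)}$ is invariant if for every $\gamma\in G_E$, $s(\gamma)\in U$ iff $r(\gamma)\in U$. A minimal compact open invariant subset is a nonempty compact open invariant subset containing no strictly smaller nonempty compact open invariant subset. *)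

From Stdlib Require Import List ZArith Arith.
Import ListNotations.
Set Implicit Arguments.

Record Graph : Type := MkGraph {
  vert : Type;
  edge : Type;
  src : edge -> vert;
  rng : edge -> vert
}.
Arguments src {_} _.
Arguments rng {_} _.

Section GraphDefs.
Variable E : Graph.

Definition sink (v : vert E) : Prop := forall e : edge E, src e <> v.
Definition inf_emitter (v : vert E) : Prop :=
  ~ exists l : list (edge E), forall e, src e = v -> In e l.

(* A finite path is represented by its source vertex v and its edge list l
   (l = [] gives the vertex v, a path of length 0). *)
Fixpoint fvalid (v : vert E) (l : list (edge E)) : Prop :=
  match l with
  | [] => True
  | e :: t => src e = v /\ fvalid (rng e) t
  end.

Fixpoint rangeOf (v : vert E) (l : list (edge E)) : vert E :=
  match l with
  | [] => v
  | e :: t => rangeOf (rng e) t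
  end.

Definition infpath (f : nat -> edge E) : Prop :=
  forall n, rng (f n) = src (f (S n)).

Inductive bpath : Type :=
| FinP : vert E -> list (edge E) -> bpath
| InfP : (nat -> edge E) -> bpath.

Definition inX (x : bpath) : Prop :=
  match x with
  | FinP v l => fvalid v l /\ (sink (rangeOf v l) \/ inf_emitter (rangeOf v l))
  | InfP f => infpath f
  end.

Definition bsrc (x : bpath) : vert E :=
  match x with
  | FinP v _ => v
  | InfP f => src (f 0)
  end.

Definition concat (v : vert E) (l : list (edge E)) (x : bpath) : bpath :=
  match x with
  | FinP _ l' => FinP v (l ++ l')
  | InfP f => InfP (fun n => if n <? length l then nth n l (f 0)
                            else f (n - length l))
  end.

Definition inG (x : bpath) (k : Z) (y : bpath) : Prop :=
  exists (a : vert E) (la : list (edge E)) (b : vert E) (lb : list (edge E))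
         (z : bpath),
    fvalid a la /\ fvalid b lb /\ inX z /\
    rangeOf a la = bsrc z /\ rangeOf b lb = bsrc z /\
    x = concat a la z /\ y = concat b lb z /\
    k = (Z.of_nat (length la) - Z.of_nat (length lb))%Z.

(* subsets of the unit space G_E^(0) ≅ X are predicates on bpath contained in inX *)
Definition subX (U : bpath -> Prop) : Prop := forall x, U x -> inX x.

Definition cyl (v : vert E) (l : list (edge E)) (y : bpath) : Prop :=
  exists z, inX z /\ bsrc z = rangeOf v l /\ y = concat v l z.

Definition basic (v : vert E) (l : list (edge E)) (F : list (edge E))
  (y : bpath) : Prop :=
  cyl v l y /\ ~ (exists e, In e F /\ cyl v (l ++ [e]) y).

Definition basic_ok (v : vert E) (l : list (edge E)) (F : list (edge E)) : Prop :=
  fvalid v l /\ (forall e, In e F -> src e = rangeOf v l).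

Definition is_open (O : bpath -> Prop) : Prop :=
  subX O /\
  forall x, O x -> exists v l F, basic_ok v l F /\ basic v l F x /\
                                 (forall y, basic v l F y -> O y).

Definition is_compact (K : bpath -> Prop) : Prop :=
  subX K /\
  forall C : (bpath -> Prop) -> Prop,
    (forall O, C O -> is_open O) ->
    (forall x, K x -> exists O, C O /\ O x) ->
    exists L : list (bpath -> Prop),
      (forall O, In O L -> C O) /\ (forall x, K x -> exists O, In O L /\ O x).

Definition invariant (U : bpath -> Prop) : Prop :=
  forall x k y, inG x k y -> (U y <-> U x).

Definition compact_open_invariant (U : bpath -> Prop) : Prop :=
  subX U /\ is_open U /\ is_compact U /\ invariant U.

Definition minimal_coi (V : bpath -> Prop) : Prop :=
  compact_open_invariant V /\ (exists x, V x) /\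
  forall W, compact_open_invariant W -> (exists x, W x) ->
            (forall x, W x -> V x) -> (forall x, V x -> W x).

End GraphDefs.

Arguments FinP {E}.
Arguments InfP {E}.

(* The unit space X is Hausdorff: two distinct boundary paths with longest common
   prefix mu are separated by Z(mu e) and Z(mu) \ Z(mu e).  Hence compact sets are
   closed and the compact open invariant sets are closed under union, intersection
   and difference.  If W' is a compact open invariant subset of W missing a point of
   W, invariance pushes a basic neighbourhood of that point inside W \ W' to a vertex
   v with a nonempty basic set Z(v) \ U_{e in F} Z(e) contained in W, while no such
   set at v is contained in W'.  A compact U meets only finitely many source
   vertices, so the number of those vertices at which W contains a basic set
   strictly decreases along proper inclusions below U.  This bounds descending
   chains, giving a minimal set through every point of U, and bounds the size of
   disjoint families of minimal sets, giving finiteness; two minimal sets that meet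
   coincide because their intersection is again compact open invariant. *)

From Pilot Require Import Defs.
From Stdlib Require Import List ZArith Lia Classical ClassicalEpsilon FunctionalExtensionality.
Import ListNotations.

Section GraphGroupoid.
Variable E : Graph.
Implicit Types (x y z : bpath E) (l m : list (edge E)) (a v : vert E)
  (f : nat -> edge E) (e : edge E).

Definition edgeAt x (i : nat) : option (edge E) :=
  match x with
  | FinP _ l => nth_error l i
  | InfP f => Some (f i)
  end.

Lemma fvalid_app a l m :
  fvalid E a (l ++ m) <-> fvalid E a l /\ fvalid E (rangeOf E a l) m.
Proof. revert a; induction l as [|e l IH]; intros a; simpl; [tauto|rewrite IH; tauto]. Qed.

Lemma rangeOf_app a l m : rangeOf E a (l ++ m) = rangeOf E (rangeOf E a l) m.
Proof. revert a; induction l; intros; simpl; auto. Qed.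

Lemma fvalid_snoc a l e :
  fvalid E a l -> src e = rangeOf E a l -> fvalid E a (l ++ [e]).
Proof. intros. apply fvalid_app; simpl; auto. Qed.

Lemma nth_error_snoc l e : nth_error (l ++ [e]) (length l) = Some e.
Proof. rewrite nth_error_app2, Nat.sub_diag by lia. reflexivity. Qed.

(* The infinite-path branch of [Defs.concat]. *)
Definition prepend l f : nat -> edge E :=
  fun n => if n <? length l then nth n l (f 0) else f (n - length l).

Lemma prepend_nil f : prepend [] f = f.
Proof. apply functional_extensionality; intros n; unfold prepend; simpl; f_equal; lia. Qed.

Lemma infpath_prepend a l f :
  fvalid E a l -> infpath E f -> rangeOf E a l = src (f 0) -> infpath E (prepend l f).
Proof.
  revert a; induction l as [|e l IH]; intros a Hl Hf Hr; [now rewrite prepend_nil|].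
  destruct Hl as [_ Hl]; intros [|n].
  - destruct l as [|e' l]; [exact Hr|]. symmetry. apply Hl.
  - apply (IH _ Hl Hf Hr n).
Qed.

Lemma concat_nil z : Defs.concat (bsrc z) [] z = z.
Proof.
  destruct z as [v l|f]; simpl; auto.
  change (InfP (prepend [] f) = InfP f). now rewrite prepend_nil.
Qed.

Lemma bsrc_concat a l z :
  fvalid E a l -> bsrc z = rangeOf E a l -> bsrc (Defs.concat a l z) = a.
Proof.
  intros Hl Hz. destruct z as [v m|f]; simpl; auto.
  change (src (prepend l f 0) = a).
  destruct l as [|e l]; simpl in *; [now rewrite prepend_nil|tauto].
Qed.

Lemma inX_concat a l z :
  fvalid E a l -> inX z -> bsrc z = rangeOf E a l -> inX (Defs.concat a l z).
Proof.
  intros Hl Hz Hs. destruct z as [v m|f]; simpl in *.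
  - destruct Hz as [Hm Hend]. subst v. rewrite fvalid_app, rangeOf_app. tauto.
  - exact (infpath_prepend a l f Hl Hz (eq_sym Hs)).
Qed.

Lemma edgeAt_concat_lt a l z i :
  i < length l -> edgeAt (Defs.concat a l z) i = nth_error l i.
Proof.
  intros Hi. destruct z as [v m|f]; simpl.
  - now rewrite nth_error_app1.
  - replace (i <? length l) with true by (symmetry; now apply Nat.ltb_lt).
    symmetry; now apply nth_error_nth'.
Qed.

Lemma edgeAt_concat_ge a l z i :
  edgeAt (Defs.concat a l z) (length l + i) = edgeAt z i.
Proof.
  destruct z as [v m|f]; simpl.
  - rewrite nth_error_app2 by lia. f_equal; lia.
  - replace (length l + i <? length l) with false by (symmetry; apply Nat.ltb_ge; lia).
    do 2 f_equal. lia.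
Qed.

Lemma src_edgeAt0 z e : inX z -> edgeAt z 0 = Some e -> src e = bsrc z.
Proof.
  destruct z as [v [|e' m]|f]; simpl; try discriminate.
  - intros [[He _] _] H. congruence.
  - intros _ H. congruence.
Qed.

Lemma edgeAt_cyl a l z i : cyl a l z -> i < length l -> edgeAt z i = nth_error l i.
Proof. intros [z0 [_ [_ ->]]] Hi. now apply edgeAt_concat_lt. Qed.

Lemma bsrc_cyl a l z : fvalid E a l -> cyl a l z -> bsrc z = a.
Proof. intros Hl [z0 [_ [Hs ->]]]. now apply bsrc_concat. Qed.

Lemma inX_cyl a l z : fvalid E a l -> cyl a l z -> inX z.
Proof. intros Hl [z0 [Hz [Hs ->]]]. now apply inX_concat. Qed.

Lemma rangeOf_infpath a l f :
  infpath E f -> src (f 0) = a ->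
  (forall i, i < length l -> nth_error l i = Some (f i)) ->
  rangeOf E a l = src (f (length l)).
Proof.
  revert a f; induction l as [|e l IH]; intros a f Hf Ha Hl; simpl; auto.
  assert (He : e = f 0) by (specialize (Hl 0 ltac:(simpl; lia)); simpl in Hl; congruence).
  apply (IH (rng e) (fun k => f (S k))).
  - intros n. apply Hf.
  - subst e. symmetry. apply Hf.
  - intros i Hi. apply (Hl (S i)). simpl; lia.
Qed.

Lemma cyl_intro a l z :
  fvalid E a l -> inX z -> bsrc z = a ->
  (forall i, i < length l -> edgeAt z i = nth_error l i) -> cyl a l z.
Proof.
  intros Hl Hz Hs Hpre. destruct z as [v m|f]; simpl in *.
  - subst v. destruct Hz as [Hm Hend].
    assert (Hfirst : firstn (length l) m = l).
    { apply nth_error_ext. intros i. rewrite nth_error_firstn.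
      destruct (Nat.ltb_spec i (length l)).
      - now apply Hpre.
      - symmetry. now apply nth_error_None. }
    rewrite <- (firstn_skipn (length l) m), Hfirst in Hm, Hend |- *.
    rewrite fvalid_app in Hm. rewrite rangeOf_app in Hend.
    exists (FinP (rangeOf E a l) (skipn (length l) m)). simpl. tauto.
  - exists (InfP (fun k => f (length l + k))). split; [|split].
    + intros n. rewrite Nat.add_succ_r. apply Hz.
    + simpl. rewrite Nat.add_0_r. symmetry. apply rangeOf_infpath; auto.
      intros i Hi. now rewrite <- Hpre.
    + simpl. f_equal. apply functional_extensionality. intros n.
      destruct (Nat.ltb_spec n (length l)) as [Hn|Hn].
      * symmetry. apply nth_error_nth. symmetry. now apply Hpre.
      * f_equal. lia.
Qed.

Lemma cyl_iff a l z : fvalid E a l ->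
  cyl a l z <-> inX z /\ bsrc z = a /\ (forall i, i < length l -> edgeAt z i = nth_error l i).
Proof.
  intros Hl; split.
  - intros H. split; [eapply inX_cyl|split; [eapply bsrc_cyl|intros; eapply edgeAt_cyl]]; eauto.
  - intros (? & ? & ?). now apply cyl_intro.
Qed.

Lemma cyl_snoc a l e z :
  fvalid E a l -> src e = rangeOf E a l -> cyl a l z ->
  edgeAt z (length l) = Some e -> cyl a (l ++ [e]) z.
Proof.
  intros Hl He Hz Hze. apply cyl_iff in Hz as (Hx & Hs & Hpre); auto.
  apply cyl_intro; auto using fvalid_snoc.
  intros i Hi. rewrite length_app in Hi; simpl in Hi.
  destruct (Nat.eq_dec i (length l)) as [->|Hne].
  - now rewrite nth_error_snoc.
  - rewrite nth_error_app1 by lia. apply Hpre. lia.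
Qed.

Lemma cyl_snoc_edgeAt a l e z : cyl a (l ++ [e]) z -> edgeAt z (length l) = Some e.
Proof.
  intros H. rewrite (edgeAt_cyl _ _ _ _ H); [apply nth_error_snoc|].
  rewrite length_app; simpl; lia.
Qed.

Lemma invariant_concat (W : bpath E -> Prop) a l z :
  invariant W -> fvalid E a l -> inX z -> bsrc z = rangeOf E a l ->
  W (Defs.concat a l z) <-> W z.
Proof.
  intros HW Hl Hz Hs. symmetry.
  apply (HW _ (Z.of_nat (length l) - Z.of_nat 0)%Z).
  exists a, l, (bsrc z), [], z. repeat split; auto. now rewrite concat_nil.
Qed.

Definition prefix x (n : nat) : list (edge E) :=
  match x with
  | FinP _ l => firstn n l
  | InfP f => map f (seq 0 n)
  end.

Lemma nth_error_prefix x n i :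
  nth_error (prefix x n) i = if i <? n then edgeAt x i else None.
Proof.
  destruct x as [v m|f]; simpl.
  - apply nth_error_firstn.
  - rewrite nth_error_map, nth_error_seq. now destruct (i <? n).
Qed.

Lemma length_prefix x n : edgeAt x n <> None -> length (prefix x n) = n.
Proof.
  destruct x as [v m|f]; simpl; intros Hn.
  - apply firstn_length_le. apply nth_error_Some in Hn. lia.
  - now rewrite length_map, length_seq.
Qed.

Lemma fvalid_prefix x n : inX x -> fvalid E (bsrc x) (prefix x n).
Proof.
  destruct x as [v m|f]; intros Hx.
  - destruct Hx as [Hm _]. rewrite <- (firstn_skipn n m) in Hm.
    now apply fvalid_app in Hm.
  - change (fvalid E (src (f 0)) (map f (seq 0 n))).
    induction n as [|n IH]; [exact I|].
    rewrite seq_S, map_app. apply fvalid_snoc; auto. symmetry.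
    replace n with (length (map f (seq 0 n))) at 2 by now rewrite length_map, length_seq.
    apply rangeOf_infpath; auto. intros i Hi.
    rewrite length_map, length_seq in Hi. rewrite nth_error_map, nth_error_seq.
    now replace (i <? n) with true by (symmetry; now apply Nat.ltb_lt).
Qed.

Lemma cyl_prefix x n : inX x -> cyl (bsrc x) (prefix x n) x.
Proof.
  intros Hx. apply cyl_intro; auto using fvalid_prefix.
  intros i Hi. rewrite nth_error_prefix.
  assert (length (prefix x n) <= n) by
    (destruct x; simpl; [apply firstn_le_length|now rewrite length_map, length_seq]).
  now replace (i <? n) with true by (symmetry; apply Nat.ltb_lt; lia).
Qed.

Lemma src_edgeAt_cyl a l z e :
  cyl a l z -> edgeAt z (length l) = Some e -> src e = rangeOf E a l.
Proof.
  intros [z0 [Hz0 [Hs ->]]] He. rewrite <- Hs.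
  apply src_edgeAt0; auto. now rewrite <- (Nat.add_0_r (length l)), edgeAt_concat_ge in He.
Qed.

Lemma bpath_ext x z :
  bsrc x = bsrc z -> (forall i, edgeAt x i = edgeAt z i) -> x = z.
Proof.
  destruct x as [v m|f], z as [w m'|g]; simpl; intros Hs He.
  - subst w. f_equal. now apply nth_error_ext.
  - specialize (He (length m)). rewrite (proj2 (nth_error_None m _)) in He; easy.
  - specialize (He (length m')). rewrite (proj2 (nth_error_None m' _)) in He; easy.
  - f_equal. apply functional_extensionality. intros i. specialize (He i). congruence.
Qed.

Lemma basic_nil a l y : basic a l [] y <-> cyl a l y.
Proof. split; [now intros []|intros H; split; [exact H|intros [e [[] _]]]]. Qed.

Lemma basic_ok_nil a l : fvalid E a l -> basic_ok E a l [].
Proof. split; [exact H|intros ? []]. Qed.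

Definition basic_nbhd x (O : bpath E -> Prop) : Prop :=
  exists a l F, basic_ok E a l F /\ basic a l F x /\ forall y, basic a l F y -> O y.

Lemma basic_nbhd_mono x (O O' : bpath E -> Prop) :
  (forall y, O y -> O' y) -> basic_nbhd x O -> basic_nbhd x O'.
Proof. intros H (a & l & F & Hok & Hx & HO). exists a, l, F; auto. Qed.

Lemma basic_nbhd_vertex x : inX x -> basic_nbhd x (@inX E).
Proof.
  intros Hx. exists (bsrc x), [], []. split; [now apply basic_ok_nil|split].
  - apply basic_nil. apply cyl_intro; simpl; auto. intros; lia.
  - intros y Hy. apply basic_nil in Hy. eapply inX_cyl; eauto. exact I.
Qed.

Lemma is_open_basic a l F : basic_ok E a l F -> is_open (basic a l F).
Proof.
  intros Hok. split.
  - intros x [Hx _]. eapply inX_cyl; eauto. apply Hok.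
  - intros x Hx. exists a, l, F. auto.
Qed.

Lemma is_open_cyl a l : fvalid E a l -> is_open (cyl a l).
Proof.
  intros Hl. split.
  - intros x Hx. eapply inX_cyl; eauto.
  - intros x Hx. exists a, l, []. split; [now apply basic_ok_nil|].
    split; [now apply basic_nil|]. intros y Hy. now apply basic_nil in Hy.
Qed.

(** * The unit space is Hausdorff *)

Lemma cyl_same_length a b l m y :
  cyl a l y -> cyl b m y -> length l = length m -> l = m.
Proof.
  intros Hl Hm Hlen. apply nth_error_ext. intros i.
  destruct (Nat.ltb_spec i (length l)).
  - rewrite <- (edgeAt_cyl _ _ _ _ Hl), <- (edgeAt_cyl _ _ _ _ Hm) by lia. reflexivity.
  - rewrite (proj2 (nth_error_None l i)), (proj2 (nth_error_None m i)) by lia. reflexivity.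
Qed.

Lemma cyl_shorter a l m y z :
  fvalid E a l -> fvalid E a m -> cyl a l y -> cyl a m y -> length l <= length m ->
  cyl a m z -> cyl a l z.
Proof.
  intros Hl Hm Hly Hmy Hlen Hmz. apply cyl_iff in Hmz as (Hz & Hs & Hpre); auto.
  apply cyl_intro; auto. intros i Hi.
  rewrite Hpre, <- (edgeAt_cyl _ _ _ _ Hmy), (edgeAt_cyl _ _ _ _ Hly); auto; lia.
Qed.

Lemma basic_of_longer_cyl a l F m y z :
  basic_ok E a l F -> fvalid E a m -> basic a l F y -> cyl a m y -> length l < length m ->
  cyl a m z -> basic a l F z.
Proof.
  intros [Hl HF] Hm [Hly Hny] Hmy Hlen Hmz. split; [eapply cyl_shorter; eauto; lia|].
  intros (e & He & Hez). apply Hny. exists e. split; auto.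
  apply cyl_snoc; auto.
  rewrite (edgeAt_cyl _ _ _ _ Hmy), <- (edgeAt_cyl _ _ _ _ Hmz) by lia.
  now apply cyl_snoc_edgeAt in Hez.
Qed.

Lemma basic_nbhd_inter x (O1 O2 : bpath E -> Prop) :
  basic_nbhd x O1 -> basic_nbhd x O2 -> basic_nbhd x (fun y => O1 y /\ O2 y).
Proof.
  intros (a & l & F & Hok1 & Hx1 & HO1) (b & m & G & Hok2 & Hx2 & HO2).
  pose proof Hok1 as [Hl HF]. pose proof Hok2 as [Hm HG].
  assert (b = a) as ->.
  { rewrite <- (bsrc_cyl _ _ _ Hm (proj1 Hx2)). exact (bsrc_cyl _ _ _ Hl (proj1 Hx1)). }
  destruct (lt_eq_lt_dec (length l) (length m)) as [[Hlt|Heq]|Hgt].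
  - exists a, m, G. split; [exact Hok2|split; [exact Hx2|]]. intros y Hy. split; auto.
    apply HO1. eapply basic_of_longer_cyl; eauto; [apply Hx2|apply Hy].
  - assert (m = l) as -> by (symmetry; eapply cyl_same_length; [apply Hx1|apply Hx2|exact Heq]).
    exists a, l, (F ++ G). split; [split; [exact Hl|]|split].
    + intros e He. apply in_app_or in He as [He|He]; auto.
    + split; [apply Hx1|]. intros (e & He & Hce).
      apply in_app_or in He as [He|He]; [apply (proj2 Hx1)|apply (proj2 Hx2)]; eauto.
    + intros y [Hy Hny]. split; [apply HO1|apply HO2]; split; auto;
        intros (e & He & Hce); apply Hny; exists e; split; auto; apply in_or_app; auto.
  - exists a, l, F. split; [exact Hok1|split; [exact Hx1|]]. intros y Hy. split; auto.
    apply HO2. apply (basic_of_longer_cyl a m G l x); auto; [apply Hx1|apply Hy].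
Qed.

Lemma cyl_vertex_iff v y : cyl v [] y <-> inX y /\ bsrc y = v.
Proof.
  rewrite cyl_iff by exact I. split; [tauto|]. intros [Hy Hs]. simpl. repeat split; auto; lia.
Qed.

Lemma basic_excludes_snoc a l F e y : In e F -> basic a l F y -> ~ cyl a (l ++ [e]) y.
Proof. intros He [_ Hn] Hy. apply Hn. eauto. Qed.

Lemma separate_at x z i e :
  inX x -> inX z -> bsrc z = bsrc x ->
  (forall j, j < i -> edgeAt z j = edgeAt x j) ->
  edgeAt x i = Some e -> edgeAt z i <> Some e ->
  fvalid E (bsrc x) (prefix x i ++ [e]) /\ cyl (bsrc x) (prefix x i ++ [e]) x /\
  basic_ok E (bsrc x) (prefix x i) [e] /\ basic (bsrc x) (prefix x i) [e] z.
Proof.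
  intros Hx Hz Hs Hagree Hxi Hzi.
  set (a := bsrc x) in *. set (l := prefix x i).
  assert (Hlen : length l = i) by (apply length_prefix; congruence).
  assert (Hl : fvalid E a l) by now apply fvalid_prefix.
  assert (Hcx : cyl a l x) by now apply cyl_prefix.
  assert (He : src e = rangeOf E a l) by (apply (src_edgeAt_cyl _ _ _ _ Hcx); congruence).
  assert (Hcz : cyl a l z).
  { apply cyl_intro; auto. intros j Hj. rewrite Hagree by lia. apply (edgeAt_cyl _ _ _ _ Hcx). lia. }
  split; [now apply fvalid_snoc|split; [apply cyl_snoc; auto; congruence|]].
  split; [split; [exact Hl|now intros ? [<-|[]]]|].
  split; [exact Hcz|]. intros (e' & [<-|[]] & Hce).
  apply cyl_snoc_edgeAt in Hce. congruence.
Qed.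

Lemma separate_points x z :
  inX x -> inX z -> x <> z -> exists O, is_open O /\ O z /\ basic_nbhd x (fun y => ~ O y).
Proof.
  intros Hx Hz Hxz.
  destruct (classic (bsrc z = bsrc x)) as [Hs|Hs].
  2:{ exists (cyl (bsrc z) []). split; [now apply is_open_cyl|split; [now apply cyl_vertex_iff|]].
      apply basic_nbhd_mono with (cyl (bsrc x) []).
      - intros y Hy Hy'. apply cyl_vertex_iff in Hy, Hy'. apply Hs. now rewrite <- (proj2 Hy).
      - exists (bsrc x), [], []. split; [now apply basic_ok_nil|].
        split; [now apply basic_nil, cyl_vertex_iff|]. intros y Hy. now apply basic_nil in Hy. }
  assert (Hdiff : exists i, edgeAt z i <> edgeAt x i).
  { apply NNPP. intros Hno. apply Hxz, bpath_ext; auto. intros i.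
    apply NNPP. intros Hi. apply Hno. eauto. }
  destruct (dec_inh_nat_subset_has_unique_least_element _ (fun i => classic _) Hdiff)
    as (i & [Hi Hleast] & _).
  assert (Hagree : forall j, j < i -> edgeAt z j = edgeAt x j).
  { intros j Hj. apply NNPP. intros Hne. specialize (Hleast j Hne). lia. }
  destruct (edgeAt x i) as [e|] eqn:Hxi.
  - destruct (separate_at x z i e) as (Hl & Hcx & Hok & Hbz); auto; try congruence.
    exists (basic (bsrc x) (prefix x i) [e]).
    split; [now apply is_open_basic|split; [exact Hbz|]].
    exists (bsrc x), (prefix x i ++ [e]), []. split; [now apply basic_ok_nil|].
    split; [now apply basic_nil|]. intros y Hy.
    apply basic_nil in Hy. intros Hb. exact (basic_excludes_snoc _ _ _ _ _ (in_eq e []) Hb Hy).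
  - destruct (edgeAt z i) as [e|] eqn:Hzi; [|congruence].
    destruct (separate_at z x i e) as (Hl & Hcz & Hok & Hbx); auto; try congruence.
    { intros j Hj. symmetry. auto. }
    exists (cyl (bsrc z) (prefix z i ++ [e])).
    split; [now apply is_open_cyl|split; [exact Hcz|]].
    exists (bsrc z), (prefix z i), [e]. split; [exact Hok|split; [exact Hbx|]].
    intros y Hy. apply (basic_excludes_snoc _ _ _ _ _ (in_eq e []) Hy).
Qed.

Lemma basic_nbhd_avoid_list x (L : list (bpath E -> Prop)) :
  inX x -> (forall O, In O L -> basic_nbhd x (fun y => ~ O y)) ->
  basic_nbhd x (fun y => forall O, In O L -> ~ O y).
Proof.
  intros Hx. induction L as [|O L IH]; intros HL.
  - apply basic_nbhd_mono with (@inX E); [intros ? ? ? []|now apply basic_nbhd_vertex].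
  - apply basic_nbhd_mono with (fun y => ~ O y /\ forall O', In O' L -> ~ O' y).
    + intros y [Hy HyL] O' [<-|Hin]; auto.
    + apply basic_nbhd_inter; [apply HL; now left|apply IH; intros; apply HL; now right].
Qed.

Lemma compact_complement_nbhd (K : bpath E -> Prop) x :
  is_compact K -> inX x -> ~ K x -> basic_nbhd x (fun y => ~ K y).
Proof.
  intros [HKX HK] Hx Hnx.
  destruct (HK (fun O => is_open O /\ basic_nbhd x (fun y => ~ O y))) as [L [HL Hcov]].
  - now intros O [HO _].
  - intros z Hz.
    assert (x <> z) by (intros ->; contradiction).
    destruct (separate_points x z) as (O & HO & Hz' & Hx'); auto.
    exists O. auto.
  - apply basic_nbhd_mono with (fun y => forall O, In O L -> ~ O y).
    + intros y Hy HKy. destruct (Hcov y HKy) as (O & Hin & HOy). exact (Hy O Hin HOy).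
    + apply basic_nbhd_avoid_list; auto. intros O Hin. apply (HL O Hin).
Qed.

Lemma is_open_X : is_open (@inX E).
Proof. split; [now intros ? ?|exact basic_nbhd_vertex]. Qed.

Lemma is_open_inter (O1 O2 : bpath E -> Prop) :
  is_open O1 -> is_open O2 -> is_open (fun y => O1 y /\ O2 y).
Proof.
  intros [HX1 H1] [_ H2]. split; [intros y [Hy _]; auto|].
  intros y [Hy1 Hy2]. apply basic_nbhd_inter; [apply H1|apply H2]; auto.
Qed.

Lemma is_open_diff_compact (O K : bpath E -> Prop) :
  is_open O -> is_compact K -> is_open (fun y => O y /\ ~ K y).
Proof.
  intros [HX HO] HK. split; [intros y [Hy _]; auto|].
  intros y [HOy HKy]. apply basic_nbhd_inter; [now apply HO|].
  apply compact_complement_nbhd; auto.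
Qed.

Lemma is_open_union (O1 O2 : bpath E -> Prop) :
  is_open O1 -> is_open O2 -> is_open (fun y => O1 y \/ O2 y).
Proof.
  intros [HX1 H1] [HX2 H2]. split; [intros y [Hy|Hy]; auto|].
  intros y [Hy|Hy]; [eapply basic_nbhd_mono, H1|eapply basic_nbhd_mono, H2]; auto.
Qed.

(** * Compact open invariant sets *)

Lemma filter_list_prop (C : (bpath E -> Prop) -> Prop) (L : list (bpath E -> Prop)) :
  exists L', (forall O, In O L' -> C O) /\ (forall O, In O L -> C O -> In O L').
Proof.
  induction L as [|O L (L' & H1 & H2)]; [exists []; simpl; tauto|].
  destruct (classic (C O)).
  - exists (O :: L'). split; [intros O' [<-|?]; auto|intros O' [<-|?] ?; simpl; auto].
  - exists L'. split; auto. intros O' [<-|?] ?; auto. contradiction.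
Qed.

Lemma is_compact_ext (K K' : bpath E -> Prop) :
  (forall y, K y <-> K' y) -> is_compact K -> is_compact K'.
Proof.
  intros Heq [HX HK]. split; [intros y Hy; apply HX, Heq, Hy|].
  intros C HC Hcov. destruct (HK C HC) as (L & HL & HLcov).
  - intros y Hy. apply Hcov, Heq, Hy.
  - exists L. split; auto. intros y Hy. apply HLcov, Heq, Hy.
Qed.

Lemma compact_diff_open (K O : bpath E -> Prop) :
  is_compact K -> is_open O -> is_compact (fun y => K y /\ ~ O y).
Proof.
  intros [HX HK] HO. split; [intros y [Hy _]; auto|].
  intros C HC Hcov.
  destruct (HK (fun O' => C O' \/ O' = O)) as (L & HL & HLcov).
  - intros O' [?| ->]; auto.
  - intros y Hy. destruct (classic (O y)) as [HOy|HOy]; [exists O; auto|].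
    destruct (Hcov y (conj Hy HOy)) as (O' & ? & ?). exists O'. auto.
  - destruct (filter_list_prop C L) as (L' & HL'C & HL').
    exists L'. split; auto.
    intros y [Hy HOy]. destruct (HLcov y Hy) as (O' & Hin & HO'y).
    destruct (HL O' Hin) as [HCO'| ->]; [exists O'; auto|contradiction].
Qed.

Lemma compact_union (K1 K2 : bpath E -> Prop) :
  is_compact K1 -> is_compact K2 -> is_compact (fun y => K1 y \/ K2 y).
Proof.
  intros [HX1 H1] [HX2 H2]. split; [intros y [Hy|Hy]; auto|].
  intros C HC Hcov.
  destruct (H1 C HC) as (L1 & HL1 & Hcov1); [intros y Hy; apply Hcov; auto|].
  destruct (H2 C HC) as (L2 & HL2 & Hcov2); [intros y Hy; apply Hcov; auto|].
  exists (L1 ++ L2). split.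
  - intros O Hin. apply in_app_or in Hin as [?|?]; auto.
  - intros y [Hy|Hy]; [destruct (Hcov1 y Hy) as (O & ? & ?)|destruct (Hcov2 y Hy) as (O & ? & ?)];
      exists O; split; auto; apply in_or_app; auto.
Qed.

Lemma coi_empty : compact_open_invariant (fun _ : bpath E => False).
Proof.
  split; [intros ? []|split; [split; intros ? []|split; [split; [intros ? []|]|]]].
  - intros C _ _. exists []. split; intros ? [].
  - intros x k y _. tauto.
Qed.

Lemma coi_union (W1 W2 : bpath E -> Prop) :
  compact_open_invariant W1 -> compact_open_invariant W2 ->
  compact_open_invariant (fun y => W1 y \/ W2 y).
Proof.
  intros (HX1 & HO1 & HK1 & HI1) (HX2 & HO2 & HK2 & HI2).
  split; [intros y [Hy|Hy]; auto|].
  split; [now apply is_open_union|split; [now apply compact_union|]].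
  intros x k y Hg. specialize (HI1 x k y Hg). specialize (HI2 x k y Hg). tauto.
Qed.

Lemma coi_inter (W1 W2 : bpath E -> Prop) :
  compact_open_invariant W1 -> compact_open_invariant W2 ->
  compact_open_invariant (fun y => W1 y /\ W2 y).
Proof.
  intros (HX1 & HO1 & HK1 & HI1) (HX2 & HO2 & HK2 & HI2).
  split; [intros y [Hy _]; auto|].
  split; [now apply is_open_inter|split].
  - apply is_compact_ext with (fun y => W1 y /\ ~ (inX y /\ ~ W2 y)).
    + intros y. split; intros [Hy1 Hy2]; split; auto.
      * apply NNPP. intros Hn. apply Hy2. split; auto.
      * now intros [_ Hn].
    + apply compact_diff_open; auto. apply is_open_diff_compact; [exact is_open_X|exact HK2].
  - intros x k y Hg. specialize (HI1 x k y Hg). specialize (HI2 x k y Hg). tauto.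
Qed.

Lemma coi_diff (W1 W2 : bpath E -> Prop) :
  compact_open_invariant W1 -> compact_open_invariant W2 ->
  compact_open_invariant (fun y => W1 y /\ ~ W2 y).
Proof.
  intros (HX1 & HO1 & HK1 & HI1) (HX2 & HO2 & HK2 & HI2).
  split; [intros y [Hy _]; auto|].
  split; [now apply is_open_diff_compact|split; [now apply compact_diff_open|]].
  intros x k y Hg. specialize (HI1 x k y Hg). specialize (HI2 x k y Hg). tauto.
Qed.

(** * Separating vertices *)

Lemma basic_iff_edgeAt a l F z :
  basic_ok E a l F ->
  basic a l F z <-> cyl a l z /\ forall e, In e F -> edgeAt z (length l) <> Some e.
Proof.
  intros [Hl HF]. split.
  - intros [Hz Hn]. split; auto. intros e He Hze. apply Hn. exists e. split; auto.
    apply cyl_snoc; auto.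
  - intros [Hz Hn]. split; auto. intros (e & He & Hze).
    exact (Hn e He (cyl_snoc_edgeAt _ _ _ _ Hze)).
Qed.

Lemma basic_concat_iff a l F z :
  basic_ok E a l F -> inX z -> bsrc z = rangeOf E a l ->
  basic a l F (Defs.concat a l z) <-> basic (rangeOf E a l) [] F z.
Proof.
  intros Hok Hz Hs.
  assert (Hok' : basic_ok E (rangeOf E a l) [] F) by (split; [exact I|apply Hok]).
  rewrite (basic_iff_edgeAt _ _ _ _ Hok), (basic_iff_edgeAt _ _ _ _ Hok'), cyl_vertex_iff.
  rewrite <- (Nat.add_0_r (length l)), edgeAt_concat_ge. simpl.
  assert (cyl a l (Defs.concat a l z)) by (exists z; auto). tauto.
Qed.

Lemma invariant_basic_tail (D : bpath E -> Prop) a l F :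
  invariant D -> basic_ok E a l F -> (forall z, basic a l F z -> D z) ->
  forall z, basic (rangeOf E a l) [] F z -> D z.
Proof.
  intros HD Hok Hsub z Hz.
  pose proof (proj1 Hz) as Hcz. apply cyl_vertex_iff in Hcz as [HzX Hzs].
  apply (invariant_concat D a l z); auto; [apply Hok|].
  apply Hsub. now apply basic_concat_iff.
Qed.

Lemma invariant_edge_tail (D : bpath E -> Prop) v F e :
  invariant D -> (forall z, basic v [] F z -> D z) -> src e = v -> ~ In e F ->
  forall z, cyl (rng e) [] z -> D z.
Proof.
  intros HD Hsub He HeF z Hz.
  assert (Hok : basic_ok E v [e] []) by (apply basic_ok_nil; simpl; auto).
  apply (invariant_basic_tail D v [e] [] HD Hok); [|now apply basic_nil].
  intros y Hy. apply basic_nil in Hy. apply Hsub. split.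
  - apply cyl_vertex_iff. split; [eapply inX_cyl|eapply bsrc_cyl]; eauto; apply Hok.
  - intros (e' & He' & Hy'). apply cyl_snoc_edgeAt in Hy'.
    rewrite (edgeAt_cyl _ _ _ _ Hy) in Hy' by (simpl; lia). simpl in Hy'. congruence.
Qed.

Definition contains_basic_at (W : bpath E -> Prop) v : Prop :=
  exists F, (exists z, basic v [] F z) /\ forall z, basic v [] F z -> W z.

Lemma contains_basic_at_mono (W W' : bpath E -> Prop) v :
  (forall y, W' y -> W y) -> contains_basic_at W' v -> contains_basic_at W v.
Proof. intros H (F & Hne & Hsub). exists F. auto. Qed.

Lemma separating_vertex_of_basic (W W' : bpath E -> Prop) v F t :
  invariant W -> invariant W' -> (forall z, basic v [] F z -> W z /\ ~ W' z) ->
  basic v [] F t ->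
  exists u, (exists z, W z /\ bsrc z = u) /\ contains_basic_at W u /\ ~ contains_basic_at W' u.
Proof.
  intros HW HW' Hsub Ht.
  assert (HD : invariant (fun y => W y /\ ~ W' y)).
  { intros x k y Hg. specialize (HW x k y Hg). specialize (HW' x k y Hg). tauto. }
  pose proof (proj1 Ht) as Hct. apply cyl_vertex_iff in Hct as [HtX Hts].
  (* If [t] starts with an edge [e], then [e] is not in [F] and all of Z(r(e)) lies in
     W \ W'; otherwise [t] is the vertex path at [v], which lies in every basic set at [v]. *)
  destruct (edgeAt t 0) as [e|] eqn:Ht0.
  - assert (He : src e = v) by (rewrite <- Hts; now apply src_edgeAt0).
    assert (Hcte : cyl v ([] ++ [e]) t) by (apply cyl_snoc; auto; [exact I|now apply cyl_vertex_iff]).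
    assert (HeF : ~ In e F) by (intros HeF; apply (proj2 Ht); exists e; auto).
    pose proof (invariant_edge_tail _ v F e HD Hsub He HeF) as Htail.
    destruct Hcte as (t1 & Ht1X & Ht1s & _). simpl in Ht1s.
    assert (Ht1 : cyl (rng e) [] t1) by now apply cyl_vertex_iff.
    exists (rng e). split; [exists t1; split; auto; now apply Htail|split].
    + exists []. split; [exists t1; now apply basic_nil|].
      intros z Hz. apply basic_nil in Hz. now apply Htail.
    + intros (F' & (z & Hz) & HW'z). apply (Htail z (proj1 Hz)), HW'z, Hz.
  - assert (Ht_all : forall F', basic v [] F' t).
    { intros F'. split; [now apply cyl_vertex_iff|]. intros (e & _ & Hte).
      apply cyl_snoc_edgeAt in Hte. simpl in Hte. congruence. }
    exists v. split; [exists t; split; auto; now apply Hsub|split].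
    + exists F. split; [exists t; exact Ht|]. intros z Hz. now apply Hsub.
    + intros (F' & _ & HW't). exact (proj2 (Hsub t Ht) (HW't t (Ht_all F'))).
Qed.

Lemma separating_vertex (W W' : bpath E -> Prop) y :
  compact_open_invariant W -> compact_open_invariant W' -> W y -> ~ W' y ->
  exists u, (exists z, W z /\ bsrc z = u) /\ contains_basic_at W u /\ ~ contains_basic_at W' u.
Proof.
  intros HW HW' Hy Hy'.
  destruct (coi_diff W W' HW HW') as (_ & [_ HD] & _ & HDinv).
  destruct (HD y (conj Hy Hy')) as (a & l & F & Hok & Hyb & Hsub).
  destruct (proj1 Hyb) as (y0 & Hy0X & Hy0s & ->).
  apply (separating_vertex_of_basic W W' (rangeOf E a l) F y0); [apply HW|apply HW'| |].
  - exact (invariant_basic_tail _ a l F HDinv Hok Hsub).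
  - now apply basic_concat_iff.
Qed.

Fixpoint count_sat (P : vert E -> Prop) (A : list (vert E)) : nat :=
  match A with
  | [] => 0
  | a :: A' => (if excluded_middle_informative (P a) then 1 else 0) + count_sat P A'
  end.

Lemma count_sat_le_length P A : count_sat P A <= length A.
Proof. induction A as [|a A IH]; simpl; auto. destruct excluded_middle_informative; lia. Qed.

Lemma count_sat_mono (P Q : vert E -> Prop) A :
  (forall v, P v -> Q v) -> count_sat P A <= count_sat Q A.
Proof.
  intros H. induction A as [|a A IH]; simpl; auto.
  destruct (excluded_middle_informative (P a)), (excluded_middle_informative (Q a)); try lia.
  exfalso; auto.
Qed.

Lemma count_sat_strict_mono (P Q : vert E -> Prop) A v :
  (forall u, P u -> Q u) -> In v A -> Q v -> ~ P v -> count_sat P A < count_sat Q A.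
Proof.
  intros H Hin HQ HP. induction A as [|a A IH]; simpl in *; [contradiction|].
  pose proof (count_sat_mono P Q A H).
  destruct Hin as [->|Hin].
  - destruct (excluded_middle_informative (P v)); [contradiction|].
    destruct (excluded_middle_informative (Q v)); [lia|contradiction].
  - specialize (IH Hin).
    destruct (excluded_middle_informative (P a)), (excluded_middle_informative (Q a)); try lia.
    exfalso; auto.
Qed.

(** * Minimal compact open invariant subsets *)

Lemma compact_sources_finite (K : bpath E -> Prop) :
  is_compact K -> exists A : list (vert E), forall y, K y -> In (bsrc y) A.
Proof.
  intros [HKX HK].
  destruct (HK (fun O => exists w, O = cyl w [])) as (L & HL & Hcov).
  - intros O [w ->]. now apply is_open_cyl.
  - intros y Hy. exists (cyl (bsrc y) []). split; [eauto|apply cyl_vertex_iff; auto].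
  - assert (HA : exists A, forall O, In O L -> exists w, In w A /\ O = cyl w []).
    { clear Hcov. induction L as [|O L IH]; [exists []; intros ? []|].
      destruct IH as [A HA]; [intros; apply HL; now right|].
      destruct (HL O (or_introl eq_refl)) as [w ->].
      exists (w :: A). intros O' [<-|Hin]; [exists w; simpl; auto|].
      destruct (HA O' Hin) as (w' & ? & ?). exists w'. simpl; auto. }
    destruct HA as [A HA]. exists A. intros y Hy.
    destruct (Hcov y Hy) as (O & Hin & HOy). destruct (HA O Hin) as (w & Hw & ->).
    apply cyl_vertex_iff in HOy. now rewrite (proj2 HOy).
Qed.

Lemma minimal_coi_disjoint (V V' : bpath E -> Prop) x :
  minimal_coi V -> minimal_coi V' -> V x -> V' x -> forall y, V y <-> V' y.
Proof.
  intros (HV & _ & HVmin) (HV' & _ & HV'min) Hx Hx'.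
  assert (Hne : exists y, V y /\ V' y) by eauto.
  pose proof (HVmin _ (coi_inter V V' HV HV') Hne (fun y H => proj1 H)) as H1.
  pose proof (HV'min _ (coi_inter V V' HV HV') Hne (fun y H => proj2 H)) as H2.
  intros y; split; intros Hy; [apply H1|apply H2]; auto.
Qed.

Definition minimal_coi_in (U V : bpath E -> Prop) : Prop :=
  minimal_coi V /\ forall x, V x -> U x.

Fixpoint union_list (Ls : list (bpath E -> Prop)) : bpath E -> Prop :=
  match Ls with
  | [] => fun _ => False
  | V :: Ls' => fun y => V y \/ union_list Ls' y
  end.

Lemma union_list_spec Ls y : union_list Ls y <-> exists V, In V Ls /\ V y.
Proof.
  induction Ls as [|V Ls IH]; simpl; [firstorder|]. rewrite IH.
  split; [intros [H|(V' & ? & ?)]; eauto|intros (V' & [<-|Hin] & H); eauto].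
Qed.

Section MinimalSubsets.
Variables (U : bpath E -> Prop) (A : list (vert E)).
Hypothesis sources_U : forall y, U y -> In (bsrc y) A.

Definition rank (W : bpath E -> Prop) : nat := count_sat (contains_basic_at W) A.

Lemma rank_lt (W W' : bpath E -> Prop) y :
  compact_open_invariant W -> compact_open_invariant W' ->
  (forall z, W' z -> W z) -> (forall z, W z -> U z) -> W y -> ~ W' y -> rank W' < rank W.
Proof.
  intros HW HW' Hsub HWU Hy Hy'.
  destruct (separating_vertex W W' y HW HW' Hy Hy') as (v & (z & Hz & <-) & Hv & Hv').
  apply (count_sat_strict_mono _ _ _ (bsrc z)); auto.
  intros u. now apply contains_basic_at_mono.
Qed.

Lemma minimal_coi_exists x :
  forall W, compact_open_invariant W -> (forall y, W y -> U y) -> W x ->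
  exists V, minimal_coi V /\ (forall y, V y -> W y) /\ V x.
Proof.
  intros W. remember (rank W) as n eqn:Hn. revert W Hn.
  induction n as [n IH] using lt_wf_ind. intros W -> HW HWU Hx.
  destruct (classic (exists W', compact_open_invariant W' /\ (exists z, W' z) /\
                       (forall z, W' z -> W z) /\ exists y, W y /\ ~ W' y))
    as [(W' & HW' & (z & Hz) & Hsub & (y & Hy & Hy'))|Hmin].
  - destruct (classic (W' x)) as [Hx'|Hx'].
    + destruct (IH (rank W') (rank_lt W W' y HW HW' Hsub HWU Hy Hy') W') as (V & ? & HV & ?);
        auto.
      exists V. auto.
    + set (W'' := fun y => W y /\ ~ W' y).
      assert (HW'' : compact_open_invariant W'') by now apply coi_diff.
      assert (Hlt : rank W'' < rank W).
      { apply (rank_lt W W'' z); auto; [now intros ? []|intros [_ H]; auto]. }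
      destruct (IH (rank W'') Hlt W'') as (V & ? & HV & ?); auto.
      * intros y0 [? _]; auto.
      * split; auto.
      * exists V. split; auto. split; auto. intros y0 Hy0. apply HV, Hy0.
  - exists W. split; [|split; auto]. split; [exact HW|split; [eauto|]].
    intros W' HW' Hne Hsub y Hy. apply NNPP. intros Hy'. apply Hmin. eauto 7.
Qed.

Lemma disjoint_minimal_family_rank Ls :
  (forall V, In V Ls -> minimal_coi_in U V) ->
  ForallOrdPairs (fun V V' => forall x, ~ (V x /\ V' x)) Ls ->
  compact_open_invariant (union_list Ls) /\ (forall y, union_list Ls y -> U y) /\
  length Ls <= rank (union_list Ls).
Proof.
  induction Ls as [|V Ls IH]; intros HM Hdisj.
  - split; [apply coi_empty|split; [easy|simpl; lia]].
  - inversion Hdisj as [|? ? HV_Ls HLs]; subst.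
    destruct IH as (HU & HUU & Hlen); [intros; apply HM; now right|exact HLs|].
    destruct (HM V (or_introl eq_refl)) as ((HV & (x & Hx) & _) & HVU).
    assert (Hx' : ~ union_list Ls x).
    { intros H. apply union_list_spec in H as (V' & Hin & HV'x).
      rewrite Forall_forall in HV_Ls. exact (HV_Ls V' Hin x (conj Hx HV'x)). }
    assert (HU' : compact_open_invariant (union_list (V :: Ls))) by now apply coi_union.
    assert (HU'U : forall y, union_list (V :: Ls) y -> U y) by (intros y [?|?]; auto).
    split; [exact HU'|split; [exact HU'U|]].
    pose proof (rank_lt _ _ x HU' HU (fun y H => or_intror H) HU'U (or_introl Hx) Hx').
    change (length (V :: Ls)) with (S (length Ls)). lia.
Qed.

Lemma minimal_coi_in_finite : exists L : list (bpath E -> Prop),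
  forall V, minimal_coi_in U V -> exists W, In W L /\ (forall x, V x <-> W x).
Proof.
  apply NNPP. intros Hinf.
  assert (Hlong : forall n, exists Ls, length Ls = n /\ (forall V, In V Ls -> minimal_coi_in U V) /\
                    ForallOrdPairs (fun V V' => forall x, ~ (V x /\ V' x)) Ls).
  { induction n as [|n (Ls & Hlen & HM & Hdisj)]; [exists []; repeat constructor; easy|].
    assert (Hnew : exists V, minimal_coi_in U V /\
                     ~ exists W, In W Ls /\ (forall x, V x <-> W x)).
    { apply NNPP. intros Hno. apply Hinf. exists Ls. intros V HV.
      apply NNPP. intros HnV. apply Hno. eauto. }
    destruct Hnew as (V & HV & HVnew).
    exists (V :: Ls). split; [simpl; auto|split; [intros V' [<-|?]; auto|constructor; auto]].
    apply Forall_forall. intros V' Hin x [Hx Hx']. apply HVnew. exists V'. split; auto.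
    apply (minimal_coi_disjoint V V' x); auto; [apply HV|apply (HM V' Hin)]. }
  destruct (Hlong (S (length A))) as (Ls & Hlen & HM & Hdisj).
  destruct (disjoint_minimal_family_rank Ls HM Hdisj) as (_ & _ & Hrank).
  pose proof (count_sat_le_length (contains_basic_at (union_list Ls)) A).
  unfold rank in Hrank. lia.
Qed.

End MinimalSubsets.

End GraphGroupoid.

Theorem lemma3p9 (E : Graph) (U : bpath E -> Prop)
  (hU : compact_open_invariant U) :
  let M := fun V : bpath E -> Prop => minimal_coi V /\ (forall x, V x -> U x) in
  (exists L : list (bpath E -> Prop),
      forall V, M V -> exists W, In W L /\ (forall x, V x <-> W x)) /\
  (forall V W, M V -> M W -> (exists x, V x /\ W x) -> forall x, V x <-> W x) /\
  (forall x, U x <-> exists V, M V /\ V x).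
Proof.
  intros M.
  destruct (compact_sources_finite E U (proj1 (proj2 (proj2 hU)))) as [A sources_U].
  split; [|split].
  - exact (minimal_coi_in_finite E U A sources_U).
  - intros V W [HV _] [HW _] (x & Hx & Hx'). exact (minimal_coi_disjoint E V W x HV HW Hx Hx').
  - intros x. split.
    + intros Hx. destruct (minimal_coi_exists E U A sources_U x U hU (fun _ H => H) Hx)
        as (V & HV & HVU & HVx).
      exists V. split; [split|]; auto.
    + intros (V & [_ HVU] & HVx). auto.
Qed.
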